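(* Let $n$ be a natural number which is not a perfect square and such that $v_2(n)\ge0$ is even (in particular $n$ may be odd). Then $D_{S(n)^*}=C_{S(n)^*}=3$.
   Context: For a natural number $n$, $\mathbb Z_n=\mathbb Z/n\mathbb Z$, $S(n)=\{x^2:x\in\mathbb Z_n\}$, $S(n)^*=S(n)\setminus\{0\}$. For $A\subseteq\mathbb Z_n$, a sequence $(y_1,\dots,y_t)$ ($t\ge1$) in $\mathbb Z_n$ is an $A$-weighted zero-sum sequence if there exist $a_1,\dots,a_t\in A$ with $\sum a_iy_i=0$; a sequence has an $A$-weighted zero-sum subsequence if some nonempty subsequence is an $A$-weighted zero-sum sequence. $D_A(n)$ is the least positive integer $t$ such that every sequence of length $t$ in $\mathbb Z_n$ has an $A$-weighted zero-sum subsequence; $C_A(n)$ is the least positive integer $t$ such that every sequence of length $t$ in $\mathbb Z_n$ has an $A$-weighted zero-sum subsequence consisting of consecutive terms. $D_{S(n)^*}=D_{S(n)^*}(n)$, $C_{S(n)^*}=C_{S(n)^*}(n)$. $v_2(n)$ is the exponent of $2$ in $n$. *)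

From mathcomp Require Import all_boot all_order all_algebra.
Set Implicit Arguments. Unset Strict Implicit. Unset Printing Implicit Defensive.
Import GRing.Theory.
Local Open Scope ring_scope.

(* S(n) = set of squares in Z_n, and S(n)^* = S(n) \ {0}.  Here 'Z_n is used;
   the main theorem only concerns non-square n, so n >= 2 and 'Z_n = Z/nZ. *)
Definition Sq (n : nat) : {set 'Z_n} := [set x ^+ 2 | x : 'Z_n].
Definition Sqstar (n : nat) : {set 'Z_n} := Sq n :\ 0.

Definition has_wzs (n : nat) (A : {set 'Z_n}) (t : nat) (y : 'I_t -> 'Z_n) : Prop :=
  exists (I : {set 'I_t}) (a : 'I_t -> 'Z_n),
    I != set0 /\ (forall i, i \in I -> a i \in A) /\
    \sum_(i in I) a i * y i = 0.

Definition has_wzs_consec (n : nat) (A : {set 'Z_n}) (t : nat) (y : 'I_t -> 'Z_n) : Prop :=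
  exists (l r : nat) (a : 'I_t -> 'Z_n),
    (l < r)%N /\ (r <= t)%N /\
    (forall i : 'I_t, (l <= i < r)%N -> a i \in A) /\
    \sum_(i : 'I_t | (l <= i < r)%N) a i * y i = 0.

Definition is_least_pos (P : nat -> Prop) (m : nat) : Prop :=
  (0 < m)%N /\ P m /\ forall t, (0 < t)%N -> (t < m)%N -> ~ P t.

Definition D_is (n : nat) (A : {set 'Z_n}) (m : nat) : Prop :=
  is_least_pos (fun t => forall y : 'I_t -> 'Z_n, has_wzs A y) m.
Definition C_is (n : nat) (A : {set 'Z_n}) (m : nat) : Prop :=
  is_least_pos (fun t => forall y : 'I_t -> 'Z_n, has_wzs_consec A y) m.

Definition perfect_square (n : nat) : Prop := exists k : nat, n = (k * k)%N.

From mathcomp Require Import all_boot all_order all_algebra all_fingroup all_solvable all_field.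
From mathcomp Require Import zify ring.
Set Implicit Arguments. Unset Strict Implicit. Unset Printing Implicit Defensive.
Import GRing.Theory.
Local Open Scope ring_scope.

(* Since n is not a square, some prime p has odd v_p(n) = k, and p is odd
   because v_2(n) is even.  Modulo p, any three terms have a zero sum weighted
   by nonzero squares over a consecutive block: either a ratio -x_(i+1)/x_i is
   a square, or both are nonsquares and a three-term solution is built from a
   sum of two squares that is a nonsquare.  Writing n = m p^k, multiplying the
   weights by (m p^((k-1)/2))^2 lifts such a solution to Z_n.  Conversely, the
   Chinese remainder theorem gives u = 1 mod 4 with -u a nonresidue modulo
   every odd prime divisor of n; comparing q-adic valuations then shows that
   n | x^2 + u y^2 forces n | x^2, so the sequence (1, u) has no weighted zero
   sum. *)

Section FinFieldSquares.
Variable F : finFieldType.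
Hypothesis F_odd : odd #|F|.

Definition is_square (x : F) := [exists c : F, c ^+ 2 == x].

Lemma is_squareP x : reflect (exists c, c ^+ 2 = x) (is_square x).
Proof. by apply: (iffP existsP) => [[c /eqP]|[c <-]]; exists c. Qed.

Lemma nonsquare_neq0 x : ~~ is_square x -> x != 0.
Proof. by apply: contraNneq => ->; apply/is_squareP; exists 0; rewrite expr0n. Qed.

Lemma sqr_root_neq0 (x c : F) : x != 0 -> c ^+ 2 = x -> c != 0.
Proof. by move=> x0 cx; apply: contraNneq x0 => c0; rewrite -cx c0 expr0n. Qed.

Lemma is_squareV (x : F) : is_square (x^-1) = is_square x.
Proof.
by apply/is_squareP/is_squareP => -[c cx]; exists c^-1; rewrite exprVn cx ?invrK.
Qed.

(* The unit group is cyclic of even order #|F| - 1, so the parity of the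
   exponent of a generator is well defined. *)
Lemma unit_generator : exists g : F,
  [/\ g != 0, forall x, x != 0 -> exists k, x = g ^+ k
    & forall k j, g ^+ k = g ^+ j -> odd k = odd j].
Proof.
have /cyclicP [u Hu] := field_unit_group_cyclic [set: {unit F}]%G.
exists (val u); split; first by rewrite -unitfE (valP u).
  move=> x x0; have ux : x \is a GRing.unit by rewrite unitfE.
  have : (Sub x ux : {unit F}) \in <[u]>%g by rewrite -Hu inE.
  by case/cycleP=> i Hi; exists i; rewrite -FinRing.val_unitX -Hi.
move=> k j Hkj.
have : (u ^+ k == u ^+ j)%g by apply/eqP/val_inj; rewrite !FinRing.val_unitX.
rewrite eq_expg_mod_order.
have -> : #[u]%g = #|F|.-1 by rewrite /order -Hu card_finField_unit.
have even_unit : (2 %| #|F|.-1)%N by move: F_odd; case: #|F| => //= m; rewrite dvdn2.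
move=> /eqP /(congr1 (modn^~ 2)); rewrite !modn_dvdm // !modn2.
by move=> /(congr1 (fun b : nat => b == 1%N)); rewrite !eqb1.
Qed.

Lemma nonsquareM x y : ~~ is_square x -> ~~ is_square y -> is_square (x * y).
Proof.
have [g [_ gen par]] := unit_generator.
have odd_exp i : ~~ is_square (g ^+ i) -> odd i.
  apply: contraR => ei; apply/is_squareP; exists (g ^+ i./2).
  by rewrite -exprM muln2 even_halfK.
move=> nx ny; have [k xk] := gen x (nonsquare_neq0 nx).
have [j yj] := gen y (nonsquare_neq0 ny).
move: nx ny; rewrite xk yj => /odd_exp ok /odd_exp oj.
apply/is_squareP; exists (g ^+ (k + j)./2); rewrite -exprM -exprD muln2 even_halfK //.
by rewrite oddD ok oj.
Qed.

Lemma exists_nonsquare : exists x : F, ~~ is_square x.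
Proof.
have [g [g0 gen par]] := unit_generator.
exists g; apply/is_squareP => -[c cg].
have [j cj] := gen c (sqr_root_neq0 g0 cg).
have := par 1%N (j * 2)%N; rewrite exprM -cj cg expr1 => /(_ erefl).
by rewrite oddM andbF.
Qed.

End FinFieldSquares.

Lemma sum_ord3_range (R : nmodType) l r (f : 'I_3 -> R) :
  \sum_(i : 'I_3 | (l <= i < r)%N) f i =
  (if (l <= 0 < r)%N then f ord0 else 0) + (if (l <= 1 < r)%N then f (inord 1) else 0)
  + (if (l <= 2 < r)%N then f (inord 2) else 0).
Proof.
rewrite big_mkcond !big_ord_recl big_ord0 /= addr0 addrA.
have -> : (lift ord0 ord0 : 'I_3) = inord 1 by apply: val_inj; rewrite /= inordK.
by have -> : (lift ord0 (lift ord0 ord0) : 'I_3) = inord 2 by apply: val_inj; rewrite /= inordK.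
Qed.

Definition anisotropic (q u : nat) :=
  forall a b : nat, ~~ (q %| b)%N -> ~~ (q %| a ^ 2 + b ^ 2 * u)%N.

Section PrimeField.
Variable p : nat.
Hypothesis p_pr : prime p.
Hypothesis p_odd : odd p.
Local Notation F := 'F_p.

Let F_odd : odd #|F|. Proof. by rewrite card_Fp. Qed.

Lemma Fp_natE (x : F) : x = (val x)%:R.
Proof.
apply: val_inj; rewrite /= val_Fp_nat // modn_small //.
by case: x => /= m; rewrite Fp_cast.
Qed.

Lemma dvdn_Fp m : (p %| m)%N = ((m%:R : F) == 0).
Proof. by rewrite (dvdn_pcharf (pchar_Fp p_pr)). Qed.

(* Otherwise every k%:R, hence every element of the prime field, would be a
   square: k + 1 = c^2 + 1^2. *)
Lemma exists_nonsquare_sum2 :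
  exists a b : F, [/\ a != 0, b != 0 & ~~ is_square (a ^+ 2 + b ^+ 2)].
Proof.
case: (boolP [exists a : F, exists b : F,
                [&& a != 0, b != 0 & ~~ is_square (a ^+ 2 + b ^+ 2)]]).
  by case/existsP=> a /existsP [b /and3P [a0 b0 nab]]; exists a, b.
move=> /existsPn sum2_sq; exfalso.
have sq_nat k : is_square (k%:R : F).
  elim: k => [|k /is_squareP [c ck]]; first by apply/is_squareP; exists 0; rewrite expr0n.
  rewrite -natr1 -ck; have [->|c0] := eqVneq c 0.
    by apply/is_squareP; exists 1; rewrite expr0n add0r expr1n.
  by have /existsPn /(_ 1) := sum2_sq c; rewrite c0 oner_neq0 expr1n /= negbK.
have [x nx] := exists_nonsquare F_odd.
by move: nx; rewrite (Fp_natE x) sq_nat.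
Qed.

(* The three-term case: with nu = -x1/x0 and mu = -x2/x1 both nonsquares,
   x2 = nu mu x0 = s^2 x0, and a^2 x0 + e^2 x1 + (b/s)^2 x2 = 0 as soon as
   e^2 nu = a^2 + b^2, which is solvable when a^2 + b^2 is a nonsquare. *)
Lemma consecutive_square_zero_sum (x : 'I_3 -> F) :
  exists l r (c : 'I_3 -> F),
    [/\ (l < r <= 3)%N, forall i : 'I_3, (l <= i < r)%N -> c i != 0
      & \sum_(i : 'I_3 | (l <= i < r)%N) c i ^+ 2 * x i = 0].
Proof.
pose w (c0 c1 c2 : F) (i : 'I_3) := nth 0 [:: c0; c1; c2] i.
have wE c0 c1 c2 l r : \sum_(i : 'I_3 | (l <= i < r)%N) w c0 c1 c2 i ^+ 2 * x i =
    (if (l <= 0 < r)%N then c0 ^+ 2 * x ord0 else 0)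
  + (if (l <= 1 < r)%N then c1 ^+ 2 * x (inord 1) else 0)
  + (if (l <= 2 < r)%N then c2 ^+ 2 * x (inord 2) else 0).
  by rewrite sum_ord3_range /w /= !inordK.
have [x00|x0] := eqVneq (x ord0) 0.
  exists 0%N, 1%N, (w 1 0 0); split => //; last by rewrite wE x00 mulr0 !addr0.
  by case=> [[|[|[|]]]] //= ? _; rewrite /w /= oner_neq0.
have [x10|x1] := eqVneq (x (inord 1)) 0.
  exists 1%N, 2%N, (w 0 1 0); split => //; last by rewrite wE x10 mulr0 addr0 add0r.
  by case=> [[|[|[|]]]] //= ? _; rewrite /w /= oner_neq0.
have [x20|x2] := eqVneq (x (inord 2)) 0.
  exists 2%N, 3%N, (w 0 0 1); split => //; last by rewrite wE x20 mulr0 !add0r.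
  by case=> [[|[|[|]]]] //= ? _; rewrite /w /= oner_neq0.
set nu := - x (inord 1) / x ord0; set mu := - x (inord 2) / x (inord 1).
have [/is_squareP [d dnu]|nnu] := boolP (is_square nu).
  have d0 : d != 0 by apply: sqr_root_neq0 dnu; rewrite mulf_neq0 ?oppr_eq0 ?invr_eq0.
  exists 0%N, 2%N, (w d 1 0); split => //; last by rewrite wE /= dnu expr1n mul1r divfK // addr0 addNr.
  by case=> [[|[|[|]]]] //= ? _; rewrite /w /= ?oner_neq0.
have [/is_squareP [d dmu]|nmu] := boolP (is_square mu).
  have d0 : d != 0 by apply: sqr_root_neq0 dmu; rewrite mulf_neq0 ?oppr_eq0 ?invr_eq0.
  exists 1%N, 3%N, (w 0 d 1); split => //; last by rewrite wE /= dmu expr1n mul1r divfK // add0r addNr.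
  by case=> [[|[|[|]]]] //= ? _; rewrite /w /= ?oner_neq0.
have /is_squareP [s snumu] := nonsquareM F_odd nnu nmu.
have [a [b [a0 b0 nab]]] := exists_nonsquare_sum2.
have /is_squareP [e eab] : is_square ((a ^+ 2 + b ^+ 2) * nu^-1).
  by apply: (nonsquareM F_odd); rewrite // is_squareV.
have s0 : s != 0 by apply: sqr_root_neq0 snumu; rewrite mulf_neq0 ?nonsquare_neq0.
exists 0%N, 3%N, (w a e (b / s)); split => //.
  case=> [[|[|[|]]]] //= ? _; rewrite /w /= ?mulf_neq0 ?invr_eq0 //.
  by apply: sqr_root_neq0 eab; rewrite mulf_neq0 ?invr_eq0 ?nonsquare_neq0.
rewrite wE /= eab expr_div_n snumu /nu /mu; field.
by rewrite x0 x1 !oppr_eq0 x2 x1.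
Qed.

Lemma consecutive_square_zero_sum_mod (Y : 'I_3 -> nat) :
  exists l r (C : 'I_3 -> nat),
    [/\ (l < r <= 3)%N, forall i : 'I_3, (l <= i < r)%N -> ~~ (p %| C i)%N
      & (p %| \sum_(i : 'I_3 | (l <= i < r)%N) C i ^ 2 * Y i)%N].
Proof.
have [l [r [c [lr c0 s0]]]] := consecutive_square_zero_sum (fun i => (Y i)%:R).
exists l, r, (fun i => val (c i)); split => //.
  by move=> i /c0; rewrite dvdn_Fp -Fp_natE.
rewrite dvdn_Fp natr_sum; apply/eqP; rewrite -[RHS]s0; apply: eq_bigr => i _.
by rewrite natrM natrX -Fp_natE.
Qed.

Lemma exists_anisotropic : exists u, anisotropic p u.
Proof.
have [x nx] := exists_nonsquare F_odd.
exists (val (- x)) => a b; rewrite !dvdn_Fp natrD natrM !natrX -Fp_natE => b0.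
apply: contra nx => /eqP ab0; apply/is_squareP; exists (a%:R / b%:R).
apply: (mulIf (expf_neq0 2 b0)); rewrite expr_div_n divfK ?expf_neq0 //.
by move/eqP: ab0; rewrite mulrN subr_eq0 mulrC => /eqP.
Qed.

End PrimeField.

Local Close Scope ring_scope.

Lemma anisotropic_mod q u v : u = v %[mod q] -> anisotropic q u -> anisotropic q v.
Proof.
move=> uv aniso a b /(aniso a).
by rewrite /dvdn -modnDmr -modnMmr uv modnMmr modnDmr.
Qed.

Lemma exists_anisotropic_seq (s : seq nat) : all (fun q => prime q && odd q) s ->
  exists u, u %% 4 = 1 /\ {in s, forall q, anisotropic q u}.
Proof.
elim: s => [|q s IH] /=; first by exists 1.
case/andP => /andP [qp qo] /[dup] s_pr /IH [u [u4 hu]].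
have [qs|qNs] := boolP (q \in s).
  by exists u; split => // q'; rewrite inE => /orP [/eqP->|]; auto.
have [t ht] := exists_anisotropic qp qo.
set L := 4 * \prod_(q' <- s) q'.
have cLq : coprime L q.
  rewrite coprime_sym coprimeMr; apply/andP; split.
    rewrite prime_coprime // (_ : 4 = 2 ^ 2) // Euclid_dvdX // andbT.
    by rewrite dvdn_prime2 //; apply: contraTneq qo => ->.
  rewrite prime_coprime // Euclid_dvd_prod // big_has; apply/hasPn => q' q's.
  have /andP [q'p _] := allP s_pr q' q's.
  by rewrite dvdn_prime2 //; apply: contra qNs => /eqP ->.
exists (chinese L q u t); split.
  have L4 : 4 %| L by rewrite dvdn_mulr.
  by rewrite -(modn_dvdm _ L4) chinese_modl // modn_dvdm.
move=> q'; rewrite inE => /orP [/eqP->|q's].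
  by apply: anisotropic_mod ht; rewrite chinese_modr.
apply: anisotropic_mod (hu q' q's).
have q'L : q' %| L by rewrite dvdn_mull // (big_rem q' q's) /= dvdn_mulr.
by rewrite -[RHS](modn_dvdm _ q'L) chinese_modl // modn_dvdm.
Qed.

Lemma exists_anisotropic_dvdn n : 0 < n -> exists u, u %% 4 = 1 /\
  forall q, prime q -> odd q -> q %| n -> anisotropic q u.
Proof.
move=> n0; have [|u [u4 hu]] := @exists_anisotropic_seq [seq q <- primes n | odd q].
  apply/allP => q; rewrite mem_filter mem_primes => /andP [-> /and3P [-> _ _]] //.
by exists u; split => // q qp qo qn; apply: hu; rewrite mem_filter mem_primes qo qp n0.
Qed.

Lemma anisotropic_primitive q u X Z : prime q -> anisotropic q u ->
  ~~ (q %| X) || ~~ (q %| Z) -> ~~ (q %| X ^ 2 + Z ^ 2 * u).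
Proof.
move=> qp aniso; have [qZ|nqZ] := boolP (q %| Z); last by move=> _; apply: aniso.
rewrite orbF => nqX; rewrite dvdn_addl ?Euclid_dvdX ?andbT //.
by apply: dvdn_mulr; rewrite Euclid_dvdX // qZ.
Qed.

Lemma sqrn_mod4 X : X ^ 2 %% 4 = odd X.
Proof.
rewrite -[X in LHS]odd_double_half -muln2; case: (odd X) => /=.
  by rewrite (_ : _ ^ 2 = (X./2 * X./2 + X./2) * 4 + 1) ?modnMDl //; ring.
by rewrite (_ : _ ^ 2 = (X./2 * X./2) * 4) ?modnMl //; ring.
Qed.

Lemma sum_sq_mod4 u X Z : u %% 4 = 1 ->
  ~~ (2 %| X) || ~~ (2 %| Z) -> ~~ (4 %| X ^ 2 + Z ^ 2 * u).
Proof.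
move=> u4; rewrite /dvdn -modnDm -modnMm !sqrn_mod4 u4 !modn2.
by case: (odd X); case: (odd Z).
Qed.

Lemma pfactor_common q X Z : prime q -> 0 < X -> 0 < Z ->
  exists m X1 Z1, [/\ m <= logn q X, X = X1 * q ^ m, Z = Z1 * q ^ m
                    & ~~ (q %| X1) || ~~ (q %| Z1)].
Proof.
move=> qp X0 Z0.
have [X' + XE] := pfactor_coprime qp X0; rewrite prime_coprime // => nqX'.
have [Z' + ZE] := pfactor_coprime qp Z0; rewrite prime_coprime // => nqZ'.
have [le|/ltnW le] := leqP (logn q X) (logn q Z).
  exists (logn q X), X', (Z' * q ^ (logn q Z - logn q X)).
  by rewrite -mulnA -expnD subnK // nqX'.
exists (logn q Z), (X' * q ^ (logn q X - logn q Z)), Z'.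
by rewrite -mulnA -expnD subnK // nqZ' orbT.
Qed.

(* Pick a prime q with n_q not dividing X^2 and cancel the largest common
   power q^m of X and Z: the cofactor X1^2 + u Z1^2 is prime to q when q is
   odd, and is 2 mod 4 or odd when q = 2, while n_q / q^(2m) is a nontrivial
   power of q, at least 4 when q = 2 since v_2(n) is even. *)
Lemma not_dvdn_sum_sq n u X Z : 0 < n -> ~~ odd (logn 2 n) -> u %% 4 = 1 ->
  (forall q, prime q -> odd q -> q %| n -> anisotropic q u) ->
  ~~ (n %| X ^ 2) -> ~~ (n %| X ^ 2 + Z ^ 2 * u).
Proof.
move=> n0 ev u4 hu nX.
have [q qn nqX] : exists2 q, q \in primes n & ~~ (n`_q %| X ^ 2).
  apply/hasP; apply: contraNT nX => /hasPn qX.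
  by apply/dvdn_partP => // q /qX; rewrite negbK.
move: qn; rewrite mem_primes n0 /= => /andP [qp qn].
have X0 : 0 < X by rewrite lt0n; apply: contraNneq nX => ->; rewrite dvdn0.
have [->|Z0] := posnP Z; first by rewrite addn0.
move: nqX; rewrite p_part pfactor_dvdn ?expn_gt0 ?X0 // lognX -ltnNge.
set e := logn q n => je.
suff: ~~ (q ^ e %| X ^ 2 + Z ^ 2 * u).
  by apply: contraNN => /(dvdn_trans (pfactor_dvdnn q n)).
have [m [X1 [Z1 [mX XE ZE prim]]]] := pfactor_common qp X0 Z0.
have -> : X ^ 2 + Z ^ 2 * u = (X1 ^ 2 + Z1 ^ 2 * u) * q ^ (2 * m).
  by rewrite XE ZE (mulnC 2 m) expnM; ring.
have me : 2 * m < e by apply: leq_ltn_trans je; rewrite leq_mul2l.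
rewrite -(subnK (ltnW me)) expnD dvdn_pmul2r ?expn_gt0 ?prime_gt0 //.
have [q2|qo] := even_prime qp.
  have ee : ~~ odd e by rewrite /e q2.
  have e2m : 2 <= e - 2 * m by have := even_halfK ee; rewrite -muln2; lia.
  rewrite q2 in prim *; apply: contra (sum_sq_mod4 u4 prim); apply: dvdn_trans.
  by rewrite (_ : 4 = 2 ^ 2) // dvdn_exp2l.
apply: contra (anisotropic_primitive qp (hu q qp qo qn) prim); apply: dvdn_trans.
by rewrite -{1}(expn1 q) dvdn_exp2l // subn_gt0.
Qed.

Lemma coprime_anisotropic n u : 0 < n -> u %% 4 = 1 ->
  (forall q, prime q -> odd q -> q %| n -> anisotropic q u) -> coprime n u.
Proof.
move=> n0 u4 hu; have u0 : 0 < u by move: u4; rewrite lt0n; case: eqP => [->|].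
rewrite coprime_has_primes //; apply/hasPn => q; rewrite !mem_primes n0 u0 /=.
case/andP=> qp qu; apply/andP => -[_ qn].
have [q2|qo] := even_prime qp.
  by move: qu; rewrite q2 /dvdn -(modn_dvdm _ (isT : 2 %| 4)) u4.
have nq1 : ~~ (q %| 1) by rewrite dvdn1; apply: contraTneq (prime_gt1 qp) => ->.
by have := hu q qp qo qn 0 1 nq1; rewrite exp1n mul1n add0n qu.
Qed.

Lemma not_square_odd_logn n : ~ perfect_square n -> exists2 p, prime p & odd (logn p n).
Proof.
move=> nsq; have [n0|n_gt0] := posnP n; first by case: nsq; exists 0; rewrite n0.
have /hasP [p] : has (fun p => odd (logn p n)) (primes n).
  apply: contraT => /hasPn even_logn; exfalso; apply: nsq.
  exists (\prod_(p <- primes n) p ^ (logn p n)./2).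
  rewrite -big_split {1}(prod_prime_decomp n_gt0) prime_decompE big_map /=.
  by apply: eq_big_seq => p /even_logn ev; rewrite -expnD addnn even_halfK.
by rewrite mem_primes => /andP [pp _]; exists p.
Qed.

Local Open Scope ring_scope.

Lemma Zp_nat_eq0 n k : (1 < n)%N -> ((k%:R : 'Z_n) == 0) = (n %| k)%N.
Proof. by move=> n1; rewrite -val_eqE /= val_Zp_nat. Qed.

Lemma Sqstar_sqrn n (A : nat) : (1 < n)%N ->
  ((A ^ 2)%:R : 'Z_n) \in Sqstar n = ~~ (n %| A ^ 2)%N.
Proof.
move=> n1; have sqA : ((A ^ 2)%:R : 'Z_n) \in Sq n.
  by apply/imsetP; exists A%:R; rewrite ?natrX.
by rewrite in_setD1 sqA andbT Zp_nat_eq0.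
Qed.

Lemma SqstarP n a : (1 < n)%N -> a \in Sqstar n ->
  exists2 A : nat, a = (A ^ 2)%:R & ~~ (n %| A ^ 2)%N.
Proof.
move=> n1 /[dup] aS; rewrite in_setD1 => /andP [_ /imsetP [x _ ax]].
have xA : a = (val x ^ 2)%:R by rewrite ax natrX natr_Zp.
by exists (val x); rewrite // -Sqstar_sqrn -?xA.
Qed.

(* With n = m p^k, k odd and M = m p^((k-1)/2), one has M^2 p = m n: scaling
   the mod-p solution by M^2 makes the weighted sum vanish mod n while the
   weights (M c_i)^2 remain nonzero mod n. *)
Lemma Sqstar_consec_zero_sum3 n p : prime p -> odd p -> odd (logn p n) -> (1 < n)%N ->
  forall y : 'I_3 -> 'Z_n, has_wzs_consec (Sqstar n) y.
Proof.
move=> pp po ok n1 y; have n0 := ltnW n1.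
have [m + nE] := pfactor_coprime pp n0; rewrite prime_coprime // => npm.
have [l [r [C [/andP [lr r3] npC dvd_sum]]]] :=
  consecutive_square_zero_sum_mod pp po (fun i => val (y i)).
set M := (m * p ^ (logn p n)./2)%N.
have MpE : (M ^ 2 * p = m * n)%N.
  rewrite [in RHS]nE /M -[in RHS](odd_double_half (logn p n)) ok -addnn.
  by rewrite /= add1n [in RHS]expnS expnD; ring.
exists l, r, (fun i => ((M * C i) ^ 2)%:R); split => //; split => //; split.
  move=> i /npC npCi; rewrite Sqstar_sqrn //; apply: contra npCi => nMC.
  have : (n * p %| n * (m * C i ^ 2))%N.
    rewrite (_ : n * (m * _) = (M * C i) ^ 2 * p)%N ?dvdn_mul //.
    by rewrite expnMn mulnAC MpE; ring.
  by rewrite dvdn_pmul2l // Euclid_dvdM // (negbTE npm) Euclid_dvdX // andbT.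
rewrite (eq_bigr (fun i => (((M * C i) ^ 2 * val (y i))%:R))); last first.
  by move=> i _; rewrite natrM natr_Zp.
rewrite -natr_sum; apply/eqP; rewrite Zp_nat_eq0 //.
have [s sumE] := dvdnP dvd_sum.
rewrite (eq_bigr (fun i => M ^ 2 * (C i ^ 2 * val (y i))))%N => [|i _].
  by rewrite -big_distrr /= sumE mulnCA MpE; apply/dvdnP; exists (s * m)%N; ring.
by rewrite expnMn mulnA.
Qed.

Lemma has_wzs_consecW n (A : {set 'Z_n}) t (y : 'I_t -> 'Z_n) :
  has_wzs_consec A y -> has_wzs A y.
Proof.
case=> l [r [a [lr [rt [aA s0]]]]].
exists [set i : 'I_t | (l <= i < r)%N], a; split; last split.
- by apply/set0Pn; exists (Ordinal (leq_trans lr rt)); rewrite inE /= leqnn lr.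
- by move=> i; rewrite inE; apply: aA.
- by rewrite -[RHS]s0; apply: eq_bigl => i; rewrite inE.
Qed.

Lemma no_wzs_1 n : (1 < n)%N -> ~ has_wzs (Sqstar n) (fun _ : 'I_1 => 1).
Proof.
move=> n1 [I [a [/set0Pn [i iI] [aS s0]]]].
rewrite (ord1 i) in iI; rewrite big_mkcond big_ord1 iI mulr1 in s0.
by have := aS _ iI; rewrite s0 in_setD1 eqxx.
Qed.

Lemma no_wzs_1u n u : (1 < n)%N -> ~~ odd (logn 2 n) -> (u %% 4 = 1)%N ->
  (forall q, prime q -> odd q -> (q %| n)%N -> anisotropic q u) ->
  ~ has_wzs (Sqstar n) (fun i : 'I_2 => [:: 1; u%:R]`_i).
Proof.
move=> n1 ev u4 hu [I [a [/set0Pn [i iI] [aS s0]]]]; have n0 := ltnW n1.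
rewrite big_mkcond big_ord_recl big_ord1 /= in s0.
case I0: (ord0 \in I) s0; case I1: (lift ord0 ord0 \in I) => /eqP.
- have [A0 -> nA0] := SqstarP n1 (aS _ I0); have [A1 -> nA1] := SqstarP n1 (aS _ I1).
  rewrite mulr1 -natrM -natrD Zp_nat_eq0 //; apply/negP.
  exact: not_dvdn_sum_sq.
- have [A0 -> nA0] := SqstarP n1 (aS _ I0).
  by rewrite mulr1 addr0 Zp_nat_eq0 // (negbTE nA0).
- have [A1 -> nA1] := SqstarP n1 (aS _ I1).
  rewrite add0r -natrM Zp_nat_eq0 // Gauss_dvdl ?(negbTE nA1) //.
  exact: coprime_anisotropic.
- move=> _; have : i \in [:: ord0; lift ord0 ord0] by case: i iI => -[|[|]].
  by rewrite !inE => /orP [] /eqP ii; rewrite ii ?I0 ?I1 in iI.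
Qed.

Theorem mainTheorem12 (n : nat) :
  ~ perfect_square n -> ~~ odd (logn 2 n) ->
  D_is (Sqstar n) 3 /\ C_is (Sqstar n) 3.
Proof.
move=> nsq ev.
have [p pp op] := not_square_odd_logn nsq.
have n1 : (1 < n)%N.
  by case: n nsq {ev op} => [|[|n]] nsq //; case: nsq; [exists 0 | exists 1].
have p_odd : odd p by case: (even_prime pp) op => // ->; rewrite (negbTE ev).
have [u [u4 hu]] := exists_anisotropic_dvdn (ltnW n1).
have consec3 := Sqstar_consec_zero_sum3 pp p_odd op n1.
have short t : (0 < t < 3)%N -> exists y : 'I_t -> 'Z_n, ~ has_wzs (Sqstar n) y.
  case: t => [|[|[|]]] // _; first by exists (fun=> 1); apply: no_wzs_1.
  by eexists; apply: (no_wzs_1u n1 ev u4 hu).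
split; split => //; split => [y|t t0 t3 all_wzs].
- exact/has_wzs_consecW/consec3.
- by have [|y /(_ (all_wzs y))] := short t; rewrite ?t0.
- exact: consec3.
- by have [|y /(_ (has_wzs_consecW (all_wzs y)))] := short t; rewrite ?t0.
Qed.
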